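(* Let $A>0$, $\phi>0$, $0<\gamma<1$, and $\alpha,\beta>0$ with $\alpha+\beta<1$. For $k,N>0$ define $n^*(k,N)=\frac{1-\alpha}{2\phi kN^{\gamma}}$ and $e^*(k,N)=\frac{\alpha}{1-\alpha}\phi k^{2}N^{\gamma}$, and the map $F_S(k,N)=\big(A\,e^*(k,N)^{\alpha}k^{\beta},\ n^*(k,N)N\big)$. Let $(\bar k,\bar N)$ be the unique fixed point of $F_S$ with $\bar k,\bar N>0$. Write $\bar e=e^*(\bar k,\bar N)$ and let $$E_k=\frac{\partial e^*}{\partial k}(\bar k,\bar N)=\frac{2\alpha\phi}{1-\alpha}\bar k\bar N^{\gamma},\quad E_N=\frac{\partial e^*}{\partial N}(\bar k,\bar N)=\frac{\alpha\gamma\phi}{1-\alpha}\bar k^{2}\bar N^{\gamma-1},$$ $$D_k=\frac{\partial n^*}{\partial k}(\bar k,\bar N)=-\frac{1-\alpha}{2\phi\bar k^{2}\bar N^{\gamma}},\quad D_N=\frac{\partial n^*}{\partial N}(\bar k,\bar N)=-\frac{\gamma(1-\alpha)}{2\phi\bar k\bar N^{\gamma+1}}.$$ Suppose $$1-\frac{\alpha\bar e^{\alpha-1}E_N\bar k^{\beta}D_k\bar N}{\alpha\bar e^{\alpha-1}E_k\bar k^{\beta}+\frac{\beta}{A}}-\frac{1}{A\alpha\bar e^{\alpha-1}E_k\bar k^{\beta}+\beta}<-D_N\bar N<1-\frac{A\alpha\bar e^{\alpha-1}E_N\bar k^{\beta}D_k\bar N}{1+A\alpha\bar e^{\alpha-1}E_k\bar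 k^{\beta}+\beta}$$ and $$A\alpha\bar e^{\alpha-1}E_k\bar k^{\beta}+\beta>1.$$ Then $(\bar k,\bar N)$ is locally asymptotically stable, i.e. both eigenvalues of the Jacobian matrix of $F_S$ at $(\bar k,\bar N)$ have modulus strictly less than $1$.
   Context: Overlapping-generations model with human capital $k_t$ and adult population $N_t$, in the case where parental childcare times are perfect substitutes; $n^*$ and $e^*$ are the household's optimal fertility and education spending and the dynamics are $(k_{t+1},N_{t+1})=F_S(k_t,N_t)$. The fixed point $(\bar k,\bar N)$ is $\bar k=(A^{1/\alpha}\alpha/2)^{\alpha/(1-\beta-\alpha)}$, $\bar N=\left(\frac{1-\alpha}{2\phi\bar k}\right)^{1/\gamma}$. *)

From HB Require Import structures.
From mathcomp Require Import all_boot all_order all_algebra.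
From mathcomp Require Import all_classical all_reals all_analysis.
From mathcomp Require Import complex.
Set Implicit Arguments. Unset Strict Implicit. Unset Printing Implicit Defensive.
Import Order.TTheory GRing.Theory Num.Theory.
Local Open Scope ring_scope.

Section Model.
Variable R : realType.
Variables (A phi gamma alpha beta : R).

Definition nstar (k N : R) : R := (1 - alpha) / (2 * phi * k * N `^ gamma).

Definition estar (k N : R) : R := alpha / (1 - alpha) * phi * k ^+ 2 * N `^ gamma.

Definition FS1 (k N : R) : R := A * (estar k N) `^ alpha * k `^ beta.
Definition FS2 (k N : R) : R := nstar k N * N.

Definition jacobianFS (k N : R) : 'M[R]_2 :=
  \matrix_(i < 2, j < 2)
    match val i, val j with
    | 0%N, 0%N => derive1 (fun x => FS1 x N) k
    | 0%N, _   => derive1 (fun y => FS1 k y) N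
    | _,   0%N => derive1 (fun x => FS2 x N) k
    | _,   _   => derive1 (fun y => FS2 k y) N
    end.

End Model.

Definition complex_eigenvalue (R : realType) (n : nat) (M : 'M[R]_n.+1)
    (z : R[i]) : Prop :=
  eigenvalue (map_mx (fun x : R => (x%:C)%C) M) z.

From HB Require Import structures.
From mathcomp Require Import all_boot all_order all_algebra.
From mathcomp Require Import all_classical all_reals all_analysis.
From mathcomp Require Import complex.
From mathcomp Require Import ring lra.
Import Order.TTheory GRing.Theory Num.Theory.
Local Open Scope ring_scope.

Lemma mxtrace_mx22 (R : pzSemiRingType) (M : 'M[R]_2) : \tr M = M 0 0 + M 1 1.
Proof.
rewrite /mxtrace !big_ord_recl big_ord0 addr0.
by congr (M _ _ + M _ _); apply/val_inj.
Qed.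

Lemma det_mx22 (R : comPzRingType) (M : 'M[R]_2) :
  \det M = M 0 0 * M 1 1 - M 0 1 * M 1 0.
Proof.
rewrite (expand_det_row _ 0) !big_ord_recl big_ord0 addr0 /cofactor !det_mx11 !mxE /=.
rewrite expr0 expr1 mul1r mulN1r mulrN.
by congr (M _ _ * M _ _ - M _ _ * M _ _); apply/val_inj.
Qed.

Lemma char_poly_mx22 (R : comNzRingType) (M : 'M[R]_2) :
  char_poly M = 'X^2 - (\tr M)%:P * 'X + (\det M)%:P.
Proof.
have sz := size_char_poly M; have /monicP lc := char_poly_monic M.
apply/polyP => -[|[|[|i]]]; rewrite coefD coefB coefXn coefMX coefC /= coefC /=.
- by rewrite char_poly_det expr2 mulN1r opprK mul1r subr0 add0r.
- by rewrite sub0r addr0; exact: char_poly_trace.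
- by rewrite -lc /lead_coef sz subr0 addr0.
- by rewrite nth_default ?sz // subr0 addr0.
Qed.

Lemma complex_eigenvalue_mx22 (R : realType) (M : 'M[R]_2) (z : R[i]) :
  complex_eigenvalue M z -> z ^+ 2 - (\tr M)%:C%C * z + (\det M)%:C%C = 0.
Proof.
have trC : \tr (map_mx (real_complex R) M) = (\tr M)%:C%C.
  by rewrite !mxtrace_mx22 !mxE rmorphD.
rewrite /complex_eigenvalue eigenvalue_root_char char_poly_mx22 det_map_mx trC.
by move=> /rootP; rewrite !hornerE.
Qed.

Lemma quadratic_root_norm_lt1 (R : rcfType) (T D : R) (z : R[i]) :
  D < 1 -> 0 < 1 - T + D -> 0 < 1 + T + D ->
  z ^+ 2 - T%:C%C * z + D%:C%C = 0 -> `|z| < 1.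
Proof.
case: z => x y hD h1 h2 /(congr1 (fun w => (complex.Re w, complex.Im w))) [].
simpc => hRe hIm.
rewrite /Normc.normc -sqrtr1 ltr_sqrt ?ltr01 //=.
have [y0 | y_neq0] := eqVneq y 0; last first.
  (* A non-real root is paired with its conjugate, so T = 2 Re z and |z|^2 = D. *)
  have hT : T = 2 * x by apply: (mulIf y_neq0); lra.
  nra.
rewrite y0 expr0n addr0 in hRe *.
(* The other root x' = T - x satisfies x x' = D, (1 - x) (1 - x') = 1 - T + D
   and (1 + x) (1 + x') = 1 + T + D, which rules out x >= 1 and x <= -1. *)
have [x_lt1 | x_ge1] := ltrP x 1; last first.
  have : 0 < (1 - x) * (1 - (T - x)) by nra.
  nra.
have [x_gtN1 | x_leN1] := ltrP (-1) x; last first.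
  have : 0 < (1 + x) * (1 + (T - x)) by nra.
  nra.
nra.
Qed.

Lemma derive1_power_law (R : realType) (f : R -> R) (c p x : R) : 0 < x ->
  (forall y, 0 < y -> f y = c * y `^ p) -> derive1 f x = p * f x / x.
Proof.
move=> x_gt0 fE.
rewrite derive1E (@near_eq_derive _ _ _ _ (c \*: (@powR R) ^~ p)); last first.
  by near=> y; rewrite fE //; near: y; exact: lt_nbhsr.
have [_ ->] := is_deriveZ c (is_derive1_powR p x_gt0).
rewrite fE // powRB; last by rewrite (gt_eqF x_gt0) implybT.
by rewrite powRr1 ?ltW // /GRing.scale /=; ring.
Unshelve. all: by end_near.
Qed.

Section Model.
Local Set Implicit Arguments.
Local Unset Strict Implicit.
Variables (R : realType) (A phi gamma alpha beta : R).
Hypotheses (phi_gt0 : 0 < phi) (alpha_gt0 : 0 < alpha) (alpha_lt1 : alpha < 1).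

Let c_ge0 : 0 <= alpha / (1 - alpha) * phi.
Proof. by rewrite mulr_ge0 ?divr_ge0 ?ltW // subr_gt0. Qed.

Lemma FS1_powR_k (N k : R) : 0 < k ->
  FS1 A phi gamma alpha beta k N =
  A * (alpha / (1 - alpha) * phi * N `^ gamma) `^ alpha * k `^ (2 * alpha + beta).
Proof.
move=> k_gt0; rewrite /FS1 /estar.
have -> : alpha / (1 - alpha) * phi * k ^+ 2 * N `^ gamma =
          alpha / (1 - alpha) * phi * N `^ gamma * k ^+ 2 by ring.
rewrite powRM ?(mulr_ge0 c_ge0) ?powR_ge0 ?sqr_ge0 //.
rewrite -(@powR_mulrn R k 2) ?ltW // -powRrM.
by rewrite powRD ?(gt_eqF k_gt0) ?implybT // !mulrA.
Qed.

Lemma FS1_powR_N (k N : R) : 0 < N ->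
  FS1 A phi gamma alpha beta k N =
  A * (alpha / (1 - alpha) * phi * k ^+ 2) `^ alpha * k `^ beta * N `^ (gamma * alpha).
Proof.
move=> N_gt0; rewrite /FS1 /estar powRM ?(mulr_ge0 c_ge0) ?powR_ge0 ?sqr_ge0 //.
rewrite -(@powRrM R N).
by rewrite mulrA mulrAC.
Qed.

Lemma FS2_powR_k (N k : R) : 0 < k ->
  FS2 phi gamma alpha k N = (1 - alpha) * N / (2 * phi * N `^ gamma) * k `^ (-1).
Proof.
by move=> k_gt0; rewrite /FS2 /nstar powR_inv1 ?ltW // !invfM; ring.
Qed.

Lemma FS2_powR_N (k N : R) : 0 < N ->
  FS2 phi gamma alpha k N = (1 - alpha) / (2 * phi * k) * N `^ (1 - gamma).
Proof.
move=> N_gt0; rewrite /FS2 /nstar powRB ?(gt_eqF N_gt0) ?implybT // powRr1 ?ltW //.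
by rewrite !invfM; ring.
Qed.

Lemma jacobianFS_elasticities {k N : R} : 0 < k -> 0 < N ->
  let J := jacobianFS A phi gamma alpha beta k N in
  [/\ J 0 0 = (2 * alpha + beta) * FS1 A phi gamma alpha beta k N / k,
      J 0 1 = gamma * alpha * FS1 A phi gamma alpha beta k N / N,
      J 1 0 = -1 * FS2 phi gamma alpha k N / k
    & J 1 1 = (1 - gamma) * FS2 phi gamma alpha k N / N].
Proof.
move=> k_gt0 N_gt0 J; rewrite /J !mxE /=.
split; apply: derive1_power_law => // y y_gt0.
- exact: FS1_powR_k.
- exact: FS1_powR_N.
- exact: FS2_powR_k.
- exact: FS2_powR_N.
Qed.

Variables (kb Nb : R).
Hypotheses (A_gt0 : 0 < A) (kb_gt0 : 0 < kb) (Nb_gt0 : 0 < Nb).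
Hypotheses (fix1 : FS1 A phi gamma alpha beta kb Nb = kb)
           (fix2 : FS2 phi gamma alpha kb Nb = Nb).

Lemma jacobianFS_fixed_point_trace :
  \tr (jacobianFS A phi gamma alpha beta kb Nb) = 2 * alpha + beta + (1 - gamma).
Proof.
rewrite mxtrace_mx22.
have [-> _ _ ->] := jacobianFS_elasticities kb_gt0 Nb_gt0.
by rewrite fix1 fix2 !mulfK ?gt_eqF.
Qed.

Lemma jacobianFS_fixed_point_det :
  \det (jacobianFS A phi gamma alpha beta kb Nb) =
  (2 * alpha + beta) * (1 - gamma) + alpha * gamma.
Proof.
rewrite det_mx22.
have [-> -> -> ->] := jacobianFS_elasticities kb_gt0 Nb_gt0.
rewrite fix1 fix2 !mulfK ?gt_eqF //.
by field; rewrite !gt_eqF.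
Qed.

Let Nb_gamma_gt0 : 0 < Nb `^ gamma. Proof. exact: powR_gt0. Qed.

Lemma fixed_point_phi : phi = (1 - alpha) / (2 * kb * Nb `^ gamma).
Proof.
have n1 : (1 - alpha) / (2 * phi * kb * Nb `^ gamma) = 1.
  by apply: (mulIf (lt0r_neq0 Nb_gt0)); rewrite mul1r.
have d_neq0 : 2 * phi * kb * Nb `^ gamma != 0 by rewrite gt_eqF // !mulr_gt0.
rewrite -(divfK d_neq0 (1 - alpha)) n1 mul1r.
by field; rewrite !gt_eqF.
Qed.

Lemma fixed_point_estar : estar phi gamma alpha kb Nb = alpha * kb / 2.
Proof. by rewrite /estar fixed_point_phi; field; rewrite !gt_eqF // subr_gt0. Qed.

Lemma fixed_point_Ek : 2 * alpha * phi / (1 - alpha) * kb * Nb `^ gamma = alpha.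
Proof. by rewrite fixed_point_phi; field; rewrite !gt_eqF // subr_gt0. Qed.

Lemma fixed_point_EN :
  alpha * gamma * phi / (1 - alpha) * kb ^+ 2 * Nb `^ (gamma - 1) =
  alpha * gamma * kb / (2 * Nb).
Proof.
rewrite powRB ?(gt_eqF Nb_gt0) ?implybT // powRr1 ?ltW // fixed_point_phi.
by field; rewrite !gt_eqF // subr_gt0.
Qed.

Lemma fixed_point_Dk : (1 - alpha) / (2 * phi * kb ^+ 2 * Nb `^ gamma) = kb^-1.
Proof. by rewrite fixed_point_phi; field; rewrite !gt_eqF // subr_gt0. Qed.

Lemma fixed_point_DN :
  gamma * (1 - alpha) / (2 * phi * kb * Nb `^ (gamma + 1)) = gamma / Nb.
Proof.
rewrite powRD ?(gt_eqF Nb_gt0) ?implybT // powRr1 ?ltW // fixed_point_phi.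
by field; rewrite !gt_eqF // subr_gt0.
Qed.

Lemma fixed_point_a :
  alpha * estar phi gamma alpha kb Nb `^ (alpha - 1) * kb `^ beta = 2 / A.
Proof.
set e := estar phi gamma alpha kb Nb.
have e_gt0 : 0 < e by rewrite /e fixed_point_estar !divr_gt0 ?mulr_gt0.
have ek : e `^ alpha * kb `^ beta = kb / A.
  by rewrite -[in RHS]fix1 /FS1 -/e; field; rewrite gt_eqF.
rewrite powRB ?(gt_eqF e_gt0) ?implybT // powRr1 ?ltW //.
have -> : alpha * (e `^ alpha / e) * kb `^ beta = alpha / e * (e `^ alpha * kb `^ beta).
  by ring.
by rewrite ek /e fixed_point_estar; field; rewrite !gt_eqF.
Qed.

End Model.

Theorem proposition2 (R : realType) (A phi gamma alpha beta kb Nb : R)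
  (hA : 0 < A) (hphi : 0 < phi) (hg0 : 0 < gamma) (hg1 : gamma < 1)
  (ha : 0 < alpha) (hb : 0 < beta) (hab : alpha + beta < 1)
  (hk : 0 < kb) (hN : 0 < Nb)
  (hfix1 : FS1 A phi gamma alpha beta kb Nb = kb)
  (hfix2 : FS2 phi gamma alpha kb Nb = Nb) :
  let eb := estar phi gamma alpha kb Nb in
  let Ek := 2 * alpha * phi / (1 - alpha) * kb * Nb `^ gamma in
  let EN := alpha * gamma * phi / (1 - alpha) * kb ^+ 2 * Nb `^ (gamma - 1) in
  let Dk := - ((1 - alpha) / (2 * phi * kb ^+ 2 * Nb `^ gamma)) in
  let DN := - (gamma * (1 - alpha) / (2 * phi * kb * Nb `^ (gamma + 1))) in
  let a := alpha * eb `^ (alpha - 1) * kb `^ beta in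
  1 - a * EN * Dk * Nb / (a * Ek + beta / A) - 1 / (A * a * Ek + beta)
    < - DN * Nb ->
  - DN * Nb < 1 - A * a * EN * Dk * Nb / (1 + A * a * Ek + beta) ->
  1 < A * a * Ek + beta ->
  forall z : R[i],
    complex_eigenvalue (jacobianFS A phi gamma alpha beta kb Nb) z ->
    `|z| < 1.
Proof.
move=> eb Ek EN Dk DN a cond _ _ z /complex_eigenvalue_mx22.
have ha1 : alpha < 1 by lra.
rewrite (jacobianFS_fixed_point_trace hphi ha ha1 hk hN hfix1 hfix2).
rewrite (jacobianFS_fixed_point_det hphi ha ha1 hk hN hfix1 hfix2).
have det_lt1 : (2 * alpha + beta) * (1 - gamma) + alpha * gamma < 1.
  move: cond; rewrite /a /eb (fixed_point_a hphi ha ha1 hA hk hN hfix1 hfix2).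
  rewrite /Ek (fixed_point_Ek hphi ha1 hk hN hfix2).
  rewrite /EN (fixed_point_EN hphi ha1 hk hN hfix2).
  rewrite /Dk (fixed_point_Dk hphi ha1 hk hN hfix2).
  rewrite /DN (fixed_point_DN hphi ha1 hk hN hfix2).
  have P_gt0 : 0 < 2 * alpha + beta by lra.
  rewrite opprK divfK ?gt_eqF //.
  have -> : 1 - 2 / A * (alpha * gamma * kb / (2 * Nb)) * - kb^-1 * Nb /
      (2 / A * alpha + beta / A) - 1 / (A * (2 / A) * alpha + beta) =
      1 - (1 - alpha * gamma) / (2 * alpha + beta).
    by field; rewrite !gt_eqF.
  by rewrite ltrBlDr -ltrBlDl ltr_pdivlMr //; lra.
apply: quadratic_root_norm_lt1 => //; nra.
Qed.
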